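(* Let $m\ge0$, $\mathbf x=(x_1,\dots,x_{m+1})$, $\mathbf y=(y_1,\dots,y_{m+1})$, $\bar{\mathbf x}=(\bar x_1,\dots,\bar x_{m+1})$, $\bar{\mathbf y}=(\bar y_1,\dots,\bar y_{m+1})$. Then $Z_{\mathrm{HT}}(2m+1;\bar{\mathbf x},\bar{\mathbf y})=Z_{\mathrm{HT}}(2m+1;\mathbf x,\mathbf y)$. Equivalently, for $\widetilde Z_{\mathrm{HT}}(2m+1;\mathbf x,\mathbf y)=\big[\prod_{i=1}^m x_i^{2m}y_i^{2m}\big]x_{m+1}^my_{m+1}^mZ_{\mathrm{HT}}(2m+1;\mathbf x,\mathbf y)$, \[ \widetilde Z_{\mathrm{HT}}(2m+1;\bar{\mathbf x},\bar{\mathbf y})=\Big[\prod_{i=1}^m x_i^{-4m}y_i^{-4m}\Big]x_{m+1}^{-2m}y_{m+1}^{-2m}\,\widetilde Z_{\mathrm{HT}}(2m+1;\mathbf x,\mathbf y). \]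
   Context: Notation: $\bar z=z^{-1}$, $\sigma(z)=z-z^{-1}$; $a$ is a fixed nonzero parameter. Vertex weights: at a vertex where a horizontal and a vertical line cross, the four incident edges are oriented with exactly two pointing in. Type 1: horizontal edges in, vertical out; type 2: horizontal out, vertical in; type 3: horizontal right, vertical up; type 4: horizontal left, vertical down; type 5: horizontal left, vertical up; type 6: horizontal right, vertical down. A vertex with spectral parameter $z$ has weight $\sigma(a^2)$ (types 1,2), $\sigma(az)$ (types 3,4), $\sigma(a\bar z)$ (types 5,6). A state is an orientation of internal edges satisfying the two-in rule at every vertex; the partition function is the sum over states of the product of vertex weights. Odd half-turn model $Z_{\mathrm{HT}}(2m+1;\mathbf x,\mathbf y)$: vertices $(r,j)$ with $1\le r\le 2m+1$ (from the top), $1\le j\le m$ (from the left), and $(r,m+1)$ with $m+2\le r\le 2m+1$; vertex $(r,j)$ has parameter $x_{\min(r,2m+2-r)}\bar y_j$. Edges join consecutive vertices in rows and columns. Left boundary edges point right (into the grid), top boundary edges of columns $1,\dots,m$ point up, bottom boundary edges of columns $1,\dots,m+1$ point down. The edge to the right of $(m+1,m)$ and the edge above $(m+2,m+1)$ form a single edge, pointing right out of $(m+1,m)$ iff pointing down into $(m+2,m+1)$. For each $r\le m$ the edges to the right of $(r,m)$ and of $(2m+2-r,m+1)$ form a single edge with one orientation (out of one vertex, into the other). For $m=0$ there are no vertices and $Z_{\mathrm{HT}}(1)=1$. *)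

From mathcomp Require Import all_boot all_order all_algebra.
Set Implicit Arguments. Unset Strict Implicit. Unset Printing Implicit Defensive.
Import Order.TTheory GRing.Theory.
Local Open Scope ring_scope.

Definition sigma {R : fieldType} (z : R) : R := z - z^-1.

(* Local configuration at a vertex, given by four booleans:
   hl = left edge points right, hr = right edge points right,
   vt = top edge points up,     vb = bottom edge points up. *)
Definition ice (hl hr vt vb : bool) : bool :=
  (hl + ~~ hr + ~~ vt + vb == 2)%N.

Definition vweight {R : fieldType} (a z : R) (hl hr vt vb : bool) : R :=
  match hl, hr, vt, vb with
  | true,  false, true,  false => sigma (a ^+ 2)  (* type 1 *)
  | false, true,  false, true  => sigma (a ^+ 2)  (* type 2 *)
  | true,  true,  true,  true  => sigma (a * z)   (* type 3 *)
  | false, false, false, false => sigma (a * z)   (* type 4 *)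
  | false, false, true,  true  => sigma (a / z)   (* type 5 *)
  | true,  true,  false, false => sigma (a / z)   (* type 6 *)
  | _, _, _, _ => 0
  end.

(* 0-based coordinates: row i in 0..2m (row r = i+1 from the top),
   column j in 0..m (column j+1 from the left). *)
Definition vtx (m i j : nat) : bool :=
  (j < m)%N || ((j == m) && (m < i)%N).

(* Edge labels (i, j, k):
   k = 0 : horizontal edge between vertices (i,j) and (i,j+1);
   k = 1 : vertical edge between (i,j) and (i+1,j);
   k = 2 (with i = 0) : glued edge number j, j in 0..m:
     for j < m it joins the right edge of (j, m-1) and the right edge of
     (2m-j, m); orientation true = pointing right out of (j, m-1)
     (hence pointing left, into (2m-j, m));
     for j = m it joins the right edge of (m, m-1) and the top edge of
     (m+1, m); true = pointing right out of (m, m-1) = down into (m+1, m).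
   Orientation of H edges: true = right; of V edges: true = up. *)
Definition is_edge (m i j k : nat) : bool :=
  if k == 0%N then ((j.+1 < m)%N || ((j.+1 == m) && (m < i)%N))
  else if k == 1%N then (i < 2 * m)%N && vtx m i j
  else (i == 0%N) && (0 < m)%N.

Definition stateT (m : nat) := {ffun 'I_(2 * m).+1 * 'I_m.+1 * 'I_3 -> bool}.

Definition st (m : nat) (f : stateT m) (k i j : nat) : bool :=
  f (inord i, inord j, inord k).

Definition hl m (f : stateT m) (i j : nat) : bool :=
  if j == 0%N then true else st f 0 i j.-1.
Definition hr m (f : stateT m) (i j : nat) : bool :=
  if (j.+1 < m)%N then st f 0 i j
  else if j.+1 == m then (if (m < i)%N then st f 0 i j else st f 2 0 i)
  else ~~ st f 2 0 (2 * m - i).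
Definition vt m (f : stateT m) (i j : nat) : bool :=
  if i == 0%N then true
  else if (j == m) && (i == m.+1) then ~~ st f 2 0 m
  else st f 1 i.-1 j.
Definition vb m (f : stateT m) (i j : nat) : bool :=
  if i == (2 * m)%N then false else st f 1 i j.

(* a state: orientation of the internal edges (non-edge labels fixed to
   false), obeying the two-in rule at every vertex *)
Definition is_state (m : nat) (f : stateT m) : bool :=
  [forall e : 'I_(2 * m).+1 * 'I_m.+1 * 'I_3,
      ~~ is_edge m e.1.1 e.1.2 e.2 ==> ~~ f e]
  && [forall i : 'I_(2 * m).+1, forall j : 'I_m.+1,
      vtx m i j ==> ice (hl f i j) (hr f i j) (vt f i j) (vb f i j)].

(* Z_HT(2m+1; x, y), with x_{k+1} = x k, y_{k+1} = y k (0-based) *)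
Definition ZHT {R : fieldType} (a : R) (m : nat) (x y : nat -> R) : R :=
  \sum_(f : stateT m | is_state f)
    \prod_(0 <= i < (2 * m).+1) \prod_(0 <= j < m.+1 | vtx m i j)
      vweight a (x (minn i (2 * m - i)) / y j)
        (hl f i j) (hr f i j) (vt f i j) (vb f i j).

Definition ZHTt {R : fieldType} (a : R) (m : nat) (x y : nat -> R) : R :=
  (\prod_(0 <= i < m) (x i ^+ (2 * m) * y i ^+ (2 * m)))
  * x m ^+ m * y m ^+ m * ZHT a m x y.

From mathcomp Require Import all_boot all_order all_algebra.
From mathcomp Require Import zify ring.
Set Implicit Arguments.
Unset Strict Implicit.
Unset Printing Implicit Defensive.
Import GRing.Theory.
Local Open Scope ring_scope.

(* Reflecting the first m columns in the middle row, with their vertical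
   arrows reversed, and column m+1 in its vertical axis, with its horizontal
   arrows reversed, maps states to states: the right edge of (r,m) and the
   left edge of (2m+2-r,m+1) trade places, compatibly with the gluing.  A
   vertex reflected in a horizontal (vertical) line keeps type 1 or 2 and
   trades 3 with 6 and 4 with 5 (3 with 5 and 4 with 6), i.e. trades
   sigma(a z) with sigma(a z^-1); as rows r and 2m+2-r carry the same x, the
   reflected state weighs at (x^-1, y^-1) what the original weighs at (x, y).
   The reflection is an involution, so it reindexes the sum defining Z_HT. *)

Lemma vweight_vreflect (R : fieldType) (a z : R) l r t b :
  vweight a z^-1 l r (~~ b) (~~ t) = vweight a z l r t b.
Proof. by case: l; case: r; case: t; case: b; rewrite /vweight ?invrK. Qed.

Lemma vweight_hreflect (R : fieldType) (a z : R) l r t b :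
  vweight a z^-1 (~~ r) (~~ l) t b = vweight a z l r t b.
Proof. by case: l; case: r; case: t; case: b; rewrite /vweight ?invrK. Qed.

Lemma ice_vreflect l r t b : ice l r (~~ b) (~~ t) = ice l r t b.
Proof. by case: l; case: r; case: t; case: b. Qed.

Lemma ice_hreflect l r t b : ice (~~ r) (~~ l) t b = ice l r t b.
Proof. by case: l; case: r; case: t; case: b. Qed.

Lemma big_involution (R : Type) (idx : R) (op : Monoid.com_law idx)
    (I : finType) (P : pred I) (h : I -> I) (F : I -> R) :
  {in P, forall i, P (h i)} -> {in P, involutive h} ->
  \big[op/idx]_(i | P i) F i = \big[op/idx]_(i | P i) F (h i).
Proof.
move=> Ph hK; rewrite (reindex_onto h h hK); apply: eq_bigl => i.
apply/idP/idP => [/andP[/Ph + /eqP hhi] | Pi]; first by rewrite hhi.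
by rewrite hK // eqxx andbT; apply: Ph.
Qed.

Section Reflection.

Variable m : nat.
Implicit Types (f : stateT m) (i j k : nat).

Definition reflect_edge f i j k : bool :=
  if ~~ is_edge m i j k then false else
  match k with
  | 0 => if (j.+1 < m)%N then st f 0 (2 * m - i) j else st f 2 0 (2 * m - i)
  | 1 => if (j < m)%N then ~~ st f 1 (2 * m - 1 - i) j else st f 1 i j
  | _ => if (j < m)%N then st f 0 (2 * m - j) m.-1 else st f 2 0 m
  end.

Definition reflect_state f : stateT m :=
  [ffun e : 'I_(2 * m).+1 * 'I_m.+1 * 'I_3 => reflect_edge f e.1.1 e.1.2 e.2].

Lemma st_ord f (i : 'I_(2 * m).+1) (j : 'I_m.+1) (k : 'I_3) :
  st f k i j = f (i, j, k).
Proof. by rewrite /st !inord_val. Qed.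

Lemma st_reflect_state f k i j : (i <= 2 * m)%N -> (j <= m)%N -> (k < 3)%N ->
  st (reflect_state f) k i j = reflect_edge f i j k.
Proof. by move=> ? ? ?; rewrite /st ffunE /= !inordK. Qed.

Ltac st_index_congr := match goal with
  | |- st ?f ?k _ _ = st ?f ?k _ _ => apply: (congr2 (st f k)); lia
  | |- ~~ st ?f ?k _ _ = ~~ st ?f ?k _ _ =>
      congr (~~ _); apply: (congr2 (st f k)); lia
  end.

Ltac split_ifs := repeat (case: ifPn => ? //=); try lia; try st_index_congr.

Ltac unfold_reflect :=
  rewrite st_reflect_state; [|lia..]; rewrite /reflect_edge /is_edge /vtx /=.

Lemma reflect_state_lcols f i j : (i <= 2 * m)%N -> (j < m)%N ->
  let f' := reflect_state f in let i' := (2 * m - i)%N in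
  [/\ hl f' i j = hl f i' j, hr f' i j = hr f i' j,
      vt f' i j = ~~ vb f i' j & vb f' i j = ~~ vt f i' j].
Proof.
move=> hi hj; split.
- rewrite /hl; case: eqP => // j0; unfold_reflect; split_ifs.
- rewrite /hr; case: ifPn => h1; first by unfold_reflect; split_ifs.
  case: ifPn => h2; last lia.
  by case: ifPn => h3; unfold_reflect; split_ifs.
- rewrite /vt /vb; case: (i =P 0%N) => h1; first by case: (_ =P _) => //; lia.
  case: (j =P m) => h2; first lia.
  by rewrite /=; case: ifPn => h3; [lia | unfold_reflect; split_ifs].
- rewrite /vt /vb; case: (i =P (2 * m)%N) => h1.
    by case: (_ =P _) => //; lia.
  case: (_ =P _) => h2; first lia; case: (j =P m) => h3; first lia.
  by rewrite /=; unfold_reflect; split_ifs.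
Qed.

Lemma reflect_state_lastcol f i : (i <= 2 * m)%N -> (m < i)%N ->
  let f' := reflect_state f in
  [/\ hl f' i m = ~~ hr f i m, hr f' i m = ~~ hl f i m,
      vt f' i m = vt f i m & vb f' i m = vb f i m].
Proof.
move=> hi hm; split.
- rewrite /hl /hr; case: eqP => m0; first lia.
  do 2![case: ifPn => ?; first lia]; rewrite negbK; unfold_reflect; split_ifs.
- rewrite /hl /hr; case: eqP => m0; first lia.
  do 2![case: ifPn => ?; first lia]; unfold_reflect; split_ifs.
- rewrite /vt; case: ifPn => ?; first lia.
  by case: ifPn => ?; unfold_reflect; split_ifs.
- by rewrite /vb; case: (_ =P _) => // ?; unfold_reflect; split_ifs.
Qed.

Lemma is_state_nonedge f (e : 'I_(2 * m).+1 * 'I_m.+1 * 'I_3) :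
  is_state f -> ~~ is_edge m e.1.1 e.1.2 e.2 -> f e = false.
Proof. by case/andP => /forallP/(_ e)/implyP fe _ /fe/negbTE. Qed.

Lemma is_state_ice f i j : is_state f ->
  (i <= 2 * m)%N -> (j <= m)%N -> vtx m i j ->
  ice (hl f i j) (hr f i j) (vt f i j) (vb f i j).
Proof.
case/andP => _ /forallP/(_ (inord i))/forallP/(_ (inord j))/implyP ice_f hi hj.
by move: ice_f; rewrite !inordK.
Qed.

Lemma reflect_state_is_state f : is_state f -> is_state (reflect_state f).
Proof.
move=> sf; apply/andP; split.
  apply/forallP => -[[i j] k]; apply/implyP => ne.
  by rewrite ffunE /reflect_edge ne.
apply/forallP => i; apply/forallP => j; apply/implyP => vij.
have hi := ltn_ord i; have hj := ltn_ord j.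
have [jm | mj] := ltnP j m.
  have [-> -> -> ->] := reflect_state_lcols f (i := i) (j := j) hi jm.
  by rewrite ice_vreflect; apply: is_state_ice; rewrite /vtx; lia.
have im : (m < i)%N by move: vij; rewrite /vtx; lia.
have -> : nat_of_ord j = m by lia.
have [-> -> -> ->] := reflect_state_lastcol f hi im.
by rewrite ice_hreflect; apply: is_state_ice; rewrite /vtx; lia.
Qed.

Lemma reflect_stateK : {in @is_state m, involutive reflect_state}.
Proof.
move=> f sf; apply/ffunP => -[[i j] k]; rewrite ffunE /=.
have hi := ltn_ord i; have hj := ltn_ord j.
case E: (is_edge m i j k); last first.
  by rewrite /reflect_edge E (is_state_nonedge (e := (i, j, k)) sf) // E.
rewrite -st_ord /reflect_edge E.
case: k E => [[|[|[|k]]] hk] //= E; rewrite /is_edge /vtx /= in E.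
all: split_ifs; repeat unfold_reflect; split_ifs.
all: rewrite ?negbK; st_index_congr.
Qed.

End Reflection.

Section Weights.

Variables (R : fieldType) (a : R) (m : nat).
Implicit Types (x y : nat -> R) (f : stateT m).

Definition state_weight x y f : R :=
  \prod_(0 <= i < (2 * m).+1) \prod_(0 <= j < m.+1 | vtx m i j)
    vweight a (x (minn i (2 * m - i)) / y j)
      (hl f i j) (hr f i j) (vt f i j) (vb f i j).

Lemma ZHTE x y : ZHT a m x y = \sum_(f | is_state f) state_weight x y f.
Proof. by []. Qed.

Lemma big_vtx_row i (F : nat -> R) :
  \prod_(0 <= j < m.+1 | vtx m i j) F j =
  (\prod_(0 <= j < m) F j) * (if (m < i)%N then F m else 1).
Proof.
rewrite big_mkcond big_nat_recr //= /vtx ltnn eqxx /=; congr (_ * _).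
by apply: eq_big_nat => j /andP[_ ->].
Qed.

Lemma state_weight_reflect x y f :
  state_weight (fun i => (x i)^-1) (fun j => (y j)^-1) (reflect_state f) =
  state_weight x y f.
Proof.
have invf_divV (u v : R) : u^-1 / v^-1 = (u / v)^-1.
  by rewrite invf_div invrK mulrC.
rewrite /state_weight.
under eq_bigr do rewrite big_vtx_row.
under [RHS]eq_bigr do rewrite big_vtx_row.
rewrite !big_split /=; congr (_ * _).
- rewrite [RHS]big_nat_rev /=; apply: eq_big_nat => i /andP[_ hi].
  have -> : (0 + (2 * m).+1 - i.+1 = 2 * m - i)%N by lia.
  have -> : minn (2 * m - i) (2 * m - (2 * m - i)) = minn i (2 * m - i) by lia.
  apply: eq_big_nat => j /andP[_ hj].
  have [-> -> -> ->] := reflect_state_lcols f (i := i) (j := j) hi hj.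
  by rewrite invf_divV vweight_vreflect.
- apply: eq_big_nat => i /andP[_ hi]; case: ifPn => // hm.
  have [-> -> -> ->] := reflect_state_lastcol f hi hm.
  by rewrite invf_divV vweight_hreflect.
Qed.

(* No nonvanishing hypothesis is needed: the field inverse is involutive,
   including at 0 where 0^-1 = 0. *)
Lemma ZHT_inv x y :
  ZHT a m (fun i => (x i)^-1) (fun j => (y j)^-1) = ZHT a m x y.
Proof.
rewrite !ZHTE [LHS](big_involution _ _ (@reflect_state_is_state m)
                                      (@reflect_stateK m)).
by apply: eq_bigr => f _; apply: state_weight_reflect.
Qed.

End Weights.

Lemma exprVn_rebalance (R : fieldType) (u : R) n :
  u != 0 -> u^-1 ^+ n = u ^- (2 * n) * u ^+ n.
Proof.
move=> u0; rewrite exprVn mul2n -addnn exprD invfM -mulrA mulVf ?mulr1 //.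
exact: expf_neq0.
Qed.

Theorem lemma16 (R : fieldType) (a : R) (m : nat) (x y : nat -> R) :
  a != 0 ->
  (forall i, (i <= m)%N -> x i != 0) ->
  (forall i, (i <= m)%N -> y i != 0) ->
  ZHT a m (fun i => (x i)^-1) (fun i => (y i)^-1) = ZHT a m x y /\
  ZHTt a m (fun i => (x i)^-1) (fun i => (y i)^-1) =
    (\prod_(0 <= i < m) (x i ^- (4 * m) * y i ^- (4 * m)))
    * x m ^- (2 * m) * y m ^- (2 * m) * ZHTt a m x y.
Proof.
move=> _ x0 y0; split; first exact: ZHT_inv.
rewrite /ZHTt ZHT_inv.
have -> : (4 * m = 2 * (2 * m))%N by lia.
under eq_big_nat => i /andP[_ /ltnW im] do
  rewrite (exprVn_rebalance _ (x0 i im)) (exprVn_rebalance _ (y0 i im)) mulrACA.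
rewrite big_split /= (exprVn_rebalance _ (x0 m (leqnn m))).
rewrite (exprVn_rebalance _ (y0 m (leqnn m))).
ring.
Qed.
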